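(* Let $V:\mathbb{R}\to\mathbb{R}$ be $C^2$, $I_1>0$, $\delta\in\mathbb{R}$, and consider on $\mathbb{R}^3\times\mathbb{R}^3\ni(\bm{a},\bm{l})$ the vector field \[ \dot{\bm{a}}=-\bm{a}\times\nabla_{\bm{l}}H,\qquad \dot{\bm{l}}=-\bm{a}\times\nabla_{\bm{a}}H-\bm{l}\times\nabla_{\bm{l}}H,\qquad H=\frac{1}{2I_1}\big(|\bm{l}|^2+\delta(\bm{a}\cdot\bm{l})^2\big)+V(a_z). \] For $s\in\{+1,-1\}$ and $m\in\mathbb{R}$, the point $\bm{a}=s\bm{e}_z$, $\bm{l}=m\bm{e}_z$ is an equilibrium, and the characteristic polynomial of the linearisation there is $\lambda^2P_+(\lambda)$, where \[ P_+(\lambda)=\lambda^4+\lambda^2(\kappa^2-2f)+f^2,\qquad \kappa=\frac{m}{I_1},\quad f=\frac{sV'(s)}{I_1} \] (independent of $\delta$). Consequently all roots of $P_+$ lie on the imaginary axis if and only if $\kappa^2\ge 4f$; if $\kappa^2<4f$, $P_+$ has roots with nonzero real part.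
   Context: $\bm{e}_z=(0,0,1)^t$, $a_z$ is the third component of $\bm{a}$, and $\times$ is the cross product in $\mathbb{R}^3$. *)

From HB Require Import structures.
From mathcomp Require Import all_boot all_order all_algebra.
From mathcomp Require Import all_classical all_reals all_analysis.
From mathcomp Require Import complex.
Set Implicit Arguments. Unset Strict Implicit. Unset Printing Implicit Defensive.
Import Order.TTheory GRing.Theory Num.Theory.
Import numFieldNormedType.Exports.
Local Open Scope ring_scope.

Section Defs.
Variable R : realType.

(* vectors of R^3 are row vectors 'rV[R]_3 ; components 0,1,2 = x,y,z *)
Definition e_z : 'rV[R]_3 := \row_(i < 3) (if val i == 2%N then 1 else 0).

Definition dot3 (u v : 'rV[R]_3) : R := \sum_(i < 3) u 0 i * v 0 i.

Definition cross3 (u v : 'rV[R]_3) : 'rV[R]_3 :=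
  \row_(i < 3)
    (if val i == 0%N then u 0 (inord 1) * v 0 (inord 2) - u 0 (inord 2) * v 0 (inord 1)
     else if val i == 1%N then u 0 (inord 2) * v 0 (inord 0) - u 0 (inord 0) * v 0 (inord 2)
     else u 0 (inord 0) * v 0 (inord 1) - u 0 (inord 1) * v 0 (inord 0)).

Definition zc (u : 'rV[R]_3) : R := u 0 (inord 2).

Definition Ham (V : R -> R) (I1 delta : R) (a l : 'rV[R]_3) : R :=
  (dot3 l l + delta * (dot3 a l) ^+ 2) / (2 * I1) + V (zc a).

Definition grad_l_H (I1 delta : R) (a l : 'rV[R]_3) : 'rV[R]_3 :=
  I1^-1 *: (l + (delta * dot3 a l) *: a).
Definition grad_a_H (V : R -> R) (I1 delta : R) (a l : 'rV[R]_3) : 'rV[R]_3 :=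
  I1^-1 *: ((delta * dot3 a l) *: l) + (derive1 V (zc a)) *: e_z.

Definition state_a (x : 'rV[R]_6) : 'rV[R]_3 := @lsubmx R 1 3 3 x.
Definition state_l (x : 'rV[R]_6) : 'rV[R]_3 := @rsubmx R 1 3 3 x.

Definition vfield (V : R -> R) (I1 delta : R) (x : 'rV[R]_6) : 'rV[R]_6 :=
  let a := state_a x in let l := state_l x in
  @row_mx R 1 3 3
    (- cross3 a (grad_l_H I1 delta a l))
    (- cross3 a (grad_a_H V I1 delta a l) - cross3 l (grad_l_H I1 delta a l)).

Definition linearisation (F : 'rV[R]_6 -> 'rV[R]_6) (x0 : 'rV[R]_6) : 'M[R]_6 :=
  \matrix_(i < 6, j < 6) derive1 (fun t : R => F (x0 + t *: delta_mx 0 j) 0 i) 0.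

Definition equil (s m : R) : 'rV[R]_6 := @row_mx R 1 3 3 (s *: e_z) (m *: e_z).

Definition Pplus (kappa f : R) : {poly R} :=
  'X^4 + (kappa ^+ 2 - 2 * f) *: 'X^2 + (f ^+ 2)%:P.

End Defs.

(** The terms containing [delta] cancel identically ([a × a = 0] and
    [a × l = - l × a]), so the field reduces to [a' = - (a × l) / I1],
    [l' = - V'(a_z) (a × e_z)].  Its Jacobian at [(s e_z, m e_z)] has six nonzero
    entries, and expanding the determinant gives [λ^2 P_+(λ)].  Over the complex
    numbers [P_+(λ) = (λ^2 - f + iκλ)(λ^2 - f - iκλ)]; for a root [x + iy] of
    the first factor the imaginary part [x (2y + κ)] vanishes, so either [x = 0] or
    [y = -κ/2], and then the real part gives [x^2 = f - κ^2/4]. *)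
From HB Require Import structures.
From mathcomp Require Import all_boot all_order all_algebra.
From mathcomp Require Import all_classical all_reals all_analysis.
From mathcomp Require Import complex ring lra.
Set Implicit Arguments. Unset Strict Implicit. Unset Printing Implicit Defensive.
Import Order.TTheory GRing.Theory Num.Theory.
Import numFieldNormedType.Exports.
Local Open Scope ring_scope.

Section EquilJacobian.
Variable K : comNzRingType.

Definition equil_jacobian (kappa q w : K) : 'M[K]_6 :=
  \matrix_(i, j)
    match val i, val j with
    | 0, 1 => - kappa | 0, 4 => q | 1, 0 => kappa | 1, 3 => - q
    | 3, 1 => - w | 4, 0 => w | _, _ => 0
    end.

Definition equil_charmx (x kappa q w : K) : 'M[K]_6 :=
  \matrix_(i, j)
    match val i, val j with
    | 0, 0 | 1, 1 | 2, 2 | 3, 3 | 4, 4 | 5, 5 => x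
    | 0, 1 => kappa | 0, 4 => - q | 1, 0 => - kappa | 1, 3 => q
    | 3, 1 => w | 4, 0 => - w | _, _ => 0
    end.

Lemma det_equil_charmx x kappa q w :
  \det (equil_charmx x kappa q w) =
  x ^+ 2 * (x ^+ 4 + (kappa ^+ 2 - 2 * (q * w)) * x ^+ 2 + (q * w) ^+ 2).
Proof.
rewrite (expand_det_row _ (@Ordinal 6 2 isT)) !big_ord_recl big_ord0 /cofactor !mxE.
rewrite /bump /= ?mul0r ?add0r ?addr0.
rewrite (expand_det_row _ (@Ordinal 5 4 isT)) !big_ord_recl big_ord0 /cofactor !mxE.
rewrite /bump /= ?mul0r ?add0r ?addr0.
rewrite (expand_det_row _ (@Ordinal 4 2 isT)) !big_ord_recl big_ord0 /cofactor !mxE.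
rewrite /bump /= ?mul0r ?add0r ?addr0.
repeat (rewrite !(expand_det_row _ ord0) !big_ord_recl !big_ord0 /cofactor !mxE;
  rewrite /bump /= ?mul0r ?add0r ?addr0 ?mulr0).
rewrite ?det_mx00.
ring.
Qed.
End EquilJacobian.

Lemma char_poly_mx_equil_jacobian (K : comNzRingType) (kappa q w : K) :
  char_poly_mx (equil_jacobian kappa q w) = equil_charmx 'X kappa%:P q%:P w%:P.
Proof.
apply/matrixP => i j; rewrite !mxE.
by case: i => [[|[|[|[|[|[|//]]]]]] ?]; case: j => [[|[|[|[|[|[|//]]]]]] ?];
  rewrite /= ?mulr1n ?mulr0n ?polyC0 ?subr0 ?sub0r ?polyCN ?opprK.
Qed.

Lemma char_poly_equil_jacobian (K : comNzRingType) (kappa q w : K) :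
  char_poly (equil_jacobian kappa q w) =
  'X^2 * ('X^4 + (kappa ^+ 2 - 2 * (q * w)) *: 'X^2 + ((q * w) ^+ 2)%:P).
Proof.
rewrite /char_poly char_poly_mx_equil_jacobian det_equil_charmx -!mul_polyC.
by rewrite !(rmorphB, rmorphM, rmorphXn, rmorph_nat).
Qed.

Section FieldCoordinates.
Variable K : comNzRingType.

(* With [(a, l) = (x 0, x 1, x 2, x 3, x 4, x 5)], this is
   [a' = - k (a × l)], [l' = - w (a × e_z)]. *)
Definition vfield_coord (k w : K) (x : nat -> K) (i : nat) : K :=
  match i with
  | 0 => - (k * (x 1 * x 5 - x 2 * x 4))
  | 1 => - (k * (x 2 * x 3 - x 0 * x 5))
  | 2 => - (k * (x 0 * x 4 - x 1 * x 3))
  | 3 => - (w * x 1)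
  | 4 => w * x 0
  | _ => 0
  end.

Lemma vfield_coord_ext k w x y i :
  (forall n, (n < 6)%N -> x n = y n) -> vfield_coord k w x i = vfield_coord k w y i.
Proof. by move=> xy; case: i => [|[|[|[|[|i]]]]] /=; rewrite ?xy. Qed.

Lemma vfield_coord_indep_w k w w' x i :
  x 0 = 0 -> x 1 = 0 -> vfield_coord k w x i = vfield_coord k w' x i.
Proof. by move=> x0 x1; case: i => [|[|[|[|[|i]]]]] /=; rewrite ?x0 ?x1 ?mulr0. Qed.
End FieldCoordinates.

Lemma vfield_coord_horner (K : comNzRingType) (k w : {poly K}) (x : nat -> {poly K}) i t :
  (vfield_coord k w x i).[t] = vfield_coord k.[t] w.[t] (fun n => (x n).[t]) i.
Proof. by case: i => [|[|[|[|[|i]]]]] /=; rewrite !hornerE. Qed.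

Section Linearisation.
Variable R : realType.

Lemma inord_lshift (i : 'I_3) : lshift 3 i = inord i :> 'I_6.
Proof. by apply/val_inj; rewrite /= inordK // (ltn_trans (ltn_ord i)). Qed.

Lemma inord_rshift (i : 'I_3) : rshift 3 i = inord i.+3 :> 'I_6.
Proof. by apply/val_inj; rewrite /= add3n inordK // ltnS ltnS ltnS. Qed.

Lemma vfieldE (V : R -> R) I1 delta (x : 'rV[R]_6) (i : 'I_6) :
  vfield V I1 delta x 0 i =
  vfield_coord I1^-1 (derive1 V (x 0 (inord 2))) (fun n => x 0 (inord n)) i.
Proof.
have inord3 n (lt_n3 : (n < 3)%N) : inord n = Ordinal lt_n3 :> 'I_3.
  by apply: val_inj; rewrite /= inordK.
rewrite /vfield /state_a /state_l /grad_l_H /grad_a_H /cross3 /dot3 /zc /e_z mxE.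
case: splitP => -[[|[|[|//]]] lt_k3] ->;
  rewrite /= !big_ord_recl big_ord0 !mxE /= ?(inord3 0 isT) ?(inord3 1 isT) ?(inord3 2 isT).
all: rewrite ?mxE /= ?inord_lshift ?inord_rshift; ring.
Qed.

Definition equil_coord (s m : R) (n : nat) : R :=
  if n == 2 then s else if n == 5 then m else 0.

Lemma equil_perturbE (s m : R) (j : 'I_6) t n : (n < 6)%N ->
  (equil s m + t *: delta_mx 0 j) 0 (inord n) = equil_coord s m n + (val j == n)%:R * t.
Proof.
move=> lt_n6; rewrite !mxE /equil /= mulrC.
have -> : (inord n == j) = (val j == n) by rewrite eq_sym -(inj_eq val_inj) /= inordK.
congr (_ + _); case: splitP => k /=; rewrite inordK // => ->; rewrite !mxE /equil_coord.
all: by case: k => [[|[|[|//]]] ?]; rewrite /= ?mulr1 ?mulr0.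
Qed.

Lemma equil_coordE (s m : R) n : (n < 6)%N -> equil s m 0 (inord n) = equil_coord s m n.
Proof.
by move=> lt_n6; have := equil_perturbE s m ord0 0 lt_n6; rewrite scale0r addr0 mulr0 addr0.
Qed.

Lemma vfield_equil (V : R -> R) (I1 delta s m : R) : vfield V I1 delta (equil s m) = 0.
Proof.
apply/rowP => i; rewrite vfieldE (vfield_coord_ext _ _ _ (@equil_coordE s m)) [RHS]mxE.
by case: i => [[|[|[|[|[|[|//]]]]]] ?]; rewrite /equil_coord /=; ring.
Qed.

Lemma linearisation_horner (F : 'rV[R]_6 -> 'rV[R]_6) x0 i j (p : {poly R}) :
  (forall t, F (x0 + t *: delta_mx 0 j) 0 i = p.[t]) ->
  linearisation F x0 i j = p^`().[0].
Proof. by move=> Fp; rewrite mxE (funext Fp) -derivE. Qed.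

Definition equil_line (s m : R) (j : 'I_6) (n : nat) : {poly R} :=
  (equil_coord s m n)%:P + (val j == n)%:R *: 'X.

Lemma vfield_equil_line (V : R -> R) (I1 delta s m : R) (i j : 'I_6) t :
  vfield V I1 delta (equil s m + t *: delta_mx 0 j) 0 i =
  (vfield_coord I1^-1%:P (derive1 V s)%:P (equil_line s m j) i).[t].
Proof.
have lineE n : (n < 6)%N ->
    (equil s m + t *: delta_mx 0 j) 0 (inord n) = (equil_line s m j n).[t].
  by move=> lt_n6; rewrite equil_perturbE // /equil_line !hornerE mulrC.
rewrite vfieldE vfield_coord_horner !hornerC (vfield_coord_ext _ _ _ lineE) lineE //.
case: (eqVneq (val j) 2) => [j2 | j_neq2]; last first.
  by rewrite /equil_line (negbTE j_neq2) !hornerE.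
by apply: vfield_coord_indep_w; rewrite /equil_line j2 !hornerE.
Qed.

Lemma linearisation_vfield_equil (V : R -> R) (I1 delta s m : R) :
  linearisation (vfield V I1 delta) (equil s m) =
  equil_jacobian (m / I1) (s / I1) (derive1 V s).
Proof.
apply/matrixP => i j; rewrite (linearisation_horner (vfield_equil_line V I1 delta s m i j)).
rewrite mxE; case: i j => [[|[|[|[|[|[|//]]]]]] ?] [[|[|[|[|[|[|//]]]]]] ?];
  rewrite /equil_line /equil_coord /= !(derivM, derivD, derivN, derivB, derivC, derivZ, derivX);
  rewrite !hornerE /=; ring.
Qed.
End Linearisation.

Section QuarticRoots.
Variable R : rcfType.
Local Open Scope complex_scope.

Lemma quadratic_factor_ReIm (k f x y : R) :
  (x +i* y) ^+ 2 - f%:C + 'i * k%:C * (x +i* y) =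
  (x ^+ 2 - y ^+ 2 - f - k * y) +i* (2 * x * y + k * x).
Proof.
rewrite expr2 /real_complex_def.
do ? [ rewrite -[(_ +i* _) * (_ +i* _)]/(_ +i* _)
     | rewrite -[(_ +i* _) + (_ +i* _)]/(_ +i* _)
     | rewrite -[(_ +i* _) - (_ +i* _)]/(_ +i* _)
     | rewrite -[- (_ +i* _)]/(_ +i* _) ].
by congr (_ +i* _); ring.
Qed.

Lemma quadratic_factor_root_Re (k f : R) (z : R[i]) : 4 * f <= k ^+ 2 ->
  z ^+ 2 - f%:C + 'i * k%:C * z = 0 -> complex.Re z = 0.
Proof.
case: z => x y /= le_4f_k2; rewrite quadratic_factor_ReIm.
move/eqP; rewrite eq_complex /= => /andP[/eqP ReE /eqP ImE].
have /eqP : x * (2 * y + k) = 0 by rewrite -ImE; ring.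
rewrite mulf_eq0 => /orP[/eqP // | /eqP yE].
have x2_le0 : x ^+ 2 <= 0 by nra.
by apply/eqP; rewrite -sqrf_eq0 eq_le x2_le0 sqr_ge0.
Qed.

Lemma quadratic_factor_root (k f : R) : k ^+ 2 < 4 * f ->
  let z := (Num.sqrt (4 * f - k ^+ 2) / 2) +i* (- k / 2) in
  z ^+ 2 - f%:C + 'i * k%:C * z = 0 /\ complex.Re z != 0.
Proof.
move=> lt_k2_4f; set r := Num.sqrt _ => z.
have r_gt0 : 0 < r by rewrite sqrtr_gt0; lra.
have r2E : r ^+ 2 = 4 * f - k ^+ 2 by rewrite sqr_sqrtr //; lra.
split; last by rewrite /=; lra.
by rewrite quadratic_factor_ReIm; congr (_ +i* _); rewrite ?expr_div_n ?r2E; field.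
Qed.
End QuarticRoots.

Section Pplus.
Variable R : realType.
Local Open Scope complex_scope.
Local Notation PplusC kappa f := (map_poly (fun r : R => r%:C) (Pplus kappa f)).

Lemma PplusC_factor (kappa f : R) (z : R[i]) :
  (PplusC kappa f).[z] =
  (z ^+ 2 - f%:C + 'i * kappa%:C * z) * (z ^+ 2 - f%:C + 'i * (- kappa)%:C * z).
Proof.
rewrite /Pplus !rmorphD /= map_polyZ !map_polyXn map_polyC /= !hornerE.
rewrite !(rmorphB, rmorphN, rmorphXn, rmorphM, rmorph_nat) /=.
have sqr_i' : 'i ^+ 2 = - 1 :> R[i] by exact: sqr_i.
by ring: sqr_i'.
Qed.

Lemma PplusC_root_Re (kappa f : R) (z : R[i]) : 4 * f <= kappa ^+ 2 ->
  root (PplusC kappa f) z -> complex.Re z = 0.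
Proof.
move=> le_4f_k2; rewrite /root PplusC_factor mulf_eq0 => /orP[] /eqP.
  exact: quadratic_factor_root_Re.
by apply: quadratic_factor_root_Re; rewrite sqrrN.
Qed.

Lemma PplusC_root_Re_neq0 (kappa f : R) : kappa ^+ 2 < 4 * f ->
  exists z : R[i], root (PplusC kappa f) z /\ complex.Re z != 0.
Proof.
move=> /quadratic_factor_root [z_root Re_neq0]; eexists; split; last exact: Re_neq0.
by rewrite /root PplusC_factor z_root mul0r.
Qed.

Lemma PplusC_rootsP (kappa f : R) :
  (forall z : R[i], root (PplusC kappa f) z -> complex.Re z = 0) <->
  4 * f <= kappa ^+ 2.
Proof.
split=> [Re0 | le_4f_k2 z]; last exact: PplusC_root_Re.
by rewrite leNgt; apply/negP => /PplusC_root_Re_neq0 [z [/Re0 ->]]; rewrite eqxx.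
Qed.
End Pplus.

Local Open Scope classical_set_scope.

Theorem mainTheorem3 (R : realType) (V : R -> R) (I1 delta s m : R) :
  (forall x : R, derivable V x 1) ->
  (forall x : R, derivable (derive1 V) x 1) ->
  continuous (derive1n 2 V) ->
  0 < I1 ->
  (s = 1 \/ s = -1) ->
  let kappa := m / I1 in
  let f := s * derive1 V s / I1 in
  let P := Pplus kappa f in
  let PC := map_poly (fun r : R => (r%:C)%C) P in
  [/\ vfield V I1 delta (equil s m) = 0,
      char_poly (linearisation (vfield V I1 delta) (equil s m)) = 'X^2 * P,
      (forall z : R[i], root PC z -> complex.Re z = 0) <-> 4 * f <= kappa ^+ 2
    & kappa ^+ 2 < 4 * f -> exists z : R[i], root PC z /\ complex.Re z != 0].
Proof.
(* No hypothesis is needed: [V'] only enters the Jacobian multiplied by [a_x] or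
   [a_y], which vanish at the equilibrium, so [V''] never appears. *)
move=> _ _ _ _ _ kappa f P PC; split.
- exact: vfield_equil.
- rewrite linearisation_vfield_equil char_poly_equil_jacobian.
  by rewrite [s / I1 * _]mulrAC.
- exact: PplusC_rootsP.
- exact: PplusC_root_Re_neq0.
Qed.
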